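(* Let $f=f(x_1,\ldots,x_n)$ be a positive non-canalyzing Boolean function such that for every $i\in[n]$ both restrictions $f_{|x_i=0}$ and $f_{|x_i=1}$ are canalyzing. Then $f$ has at least $n+2$ extremal points.
   Context: $B=\{0,1\}$, $\preceq$ coordinatewise order on $B^n$. $f$ is positive if $f(\mathbf{x})=1$ and $\mathbf{x}\preceq\mathbf{y}$ imply $f(\mathbf{y})=1$. Extremal points are the $\preceq$-maximal false points and the $\preceq$-minimal true points of $f$. $f_{|x_i=\alpha}$ is obtained by fixing $x_i=\alpha$. $f$ is canalyzing if for some $i$, $f_{|x_i=0}$ or $f_{|x_i=1}$ is constant. *)

From mathcomp Require Import all_boot.
Set Implicit Arguments. Unset Strict Implicit. Unset Printing Implicit Defensive.

Notation vec n := {ffun 'I_n -> bool}.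

Definition vle n (x y : vec n) : bool := [forall i, (x i <= y i)%N].

Definition positive n (f : vec n -> bool) : Prop :=
  forall x y : vec n, f x -> vle x y -> f y.

Definition max_false n (f : vec n -> bool) (x : vec n) : bool :=
  ~~ f x && [forall y, (vle x y && (y != x)) ==> f y].
Definition min_true n (f : vec n -> bool) (x : vec n) : bool :=
  f x && [forall y, (vle y x && (y != x)) ==> ~~ f y].

Definition extremal n (f : vec n -> bool) : {set vec n} :=
  [set x | max_false f x || min_true f x].

(* f_{|x_i = a} : the function of the remaining n variables obtained by
   fixing variable i of an (n+1)-variable function to a. *)
Definition restrict n (f : vec n.+1 -> bool) (i : 'I_n.+1) (a : bool)
  : vec n -> bool :=
  fun y => f [ffun k => if unlift i k is Some j then y j else a].

Definition canalyzing n (f : vec n -> bool) : Prop :=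
  exists (i : 'I_n) (a c : bool), forall x : vec n, x i = a -> f x = c.

(* Since f is not canalyzing, every point of weight at most 1 is false and every
   point of co-weight at most 1 is true: otherwise, by positivity, fixing a single
   variable would make f constant.  So true points of weight 2 are minimal true
   points and false points of co-weight 2 are maximal false points.  Canalyzing of
   f_{|x_i=1} (resp. f_{|x_i=0}) yields at every i a true pair {i, j} (resp. a
   false point whose zeros are {i, j}), and positivity makes every such pair meet
   every such zero set.  With N >= 5 variables, two cross-intersecting graphs
   without isolated vertices both contain the full star at a common vertex a,
   which gives 2(N - 1) >= N + 2 extremal points; for N = 3, 4 the extremal points
   of weight 1 and 2 are counted directly. *)

From mathcomp Require Import all_boot zify.
Set Implicit Arguments. Unset Strict Implicit. Unset Printing Implicit Defensive.

Definition supp n (x : vec n) : {set 'I_n} := [set i | x i].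
Definition chi n (A : {set 'I_n}) : vec n := [ffun i => i \in A].

Lemma chiE n (A : {set 'I_n}) i : chi A i = (i \in A).
Proof. by rewrite ffunE. Qed.

Lemma supp_chi n (A : {set 'I_n}) : supp (chi A) = A.
Proof. by apply/setP => i; rewrite inE chiE. Qed.

Lemma chi_supp n (x : vec n) : chi (supp x) = x.
Proof. by apply/ffunP => i; rewrite chiE inE. Qed.

Lemma chi_inj n : injective (@chi n).
Proof. by move=> A B /(congr1 (@supp n)); rewrite !supp_chi. Qed.

Lemma vle_supp n (x y : vec n) : vle x y = (supp x \subset supp y).
Proof.
apply/forallP/subsetP => [le_xy i | sub_xy i]; rewrite ?inE.
  by have := le_xy i; case: (x i); case: (y i).
by have := sub_xy i; rewrite !inE; case: (x i) => // ->.
Qed.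

Lemma card_supp_lt n (x y : vec n) : vle y x -> y != x -> #|supp y| < #|supp x|.
Proof.
rewrite vle_supp => sub_yx neq_yx; apply: proper_card; rewrite properEneq sub_yx andbT.
by apply: contraNneq neq_yx => eq_supp; rewrite -[y]chi_supp eq_supp chi_supp.
Qed.

Lemma card_le1_subset1 (T : finType) (t0 : T) (A : {set T}) :
  #|A| <= 1 -> exists t, A \subset [set t].
Proof.
case: (set_0Vmem A) => [-> _ | [t tA] /card_le1_eqP A1]; first by exists t0; apply: sub0set.
by exists t; apply/subsetP => s sA; rewrite inE (A1 s t).
Qed.

Definition layer n k : {set vec n} := [set x | #|supp x| == k].

Lemma card_layer n k : #|layer n k| = 'C(n, k).
Proof.
rewrite -[n in 'C(n, _)]card_ord -card_draws -(card_imset _ (@chi_inj n)).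
apply: eq_card => x; rewrite inE; apply/idP/imsetP => [x_k | [A A_k ->]].
  by exists (supp x); rewrite ?inE ?chi_supp.
by rewrite supp_chi; rewrite inE in A_k.
Qed.

Lemma card_extremal n (f : vec n -> bool) :
  #|extremal f| = #|[set x | min_true f x]| + #|[set x | max_false f x]|.
Proof.
rewrite -cardsUI (_ : _ :&: _ = set0) ?cards0 ?addn0.
  by apply: eq_card => x; rewrite !inE orbC.
by apply/setP => x; rewrite !inE /min_true /max_false; case: (f x) => //=; rewrite andbF.
Qed.

Lemma set2_inj (T : finType) (a v w : T) : v != a -> [set a; v] = [set a; w] -> v = w.
Proof. by move=> va e; move: (set22 a v); rewrite e !inE (negbTE va) => /eqP. Qed.

Definition meets (T : eqType) (p q r s : T) := [|| p == r, p == s, q == r | q == s].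

Definition cross_intersecting (T : eqType) (G H : rel T) :=
  forall p q r s, G p q -> H r s -> meets p q r s.

Lemma meetsC (T : eqType) (p q r s : T) : meets p q r s = meets r s p q.
Proof. by rewrite /meets !(eq_sym p) !(eq_sym q); do 4 case: (_ == _). Qed.

Lemma cross_intersectingC (T : eqType) (G H : rel T) :
  cross_intersecting G H -> cross_intersecting H G.
Proof. by move=> GH p q r s Hpq Grs; rewrite meetsC; apply: GH. Qed.

Lemma meets_fresh (T : eqType) (p q z y : T) :
  z != p -> z != q -> meets p q z y -> (p == y) || (q == y).
Proof. by rewrite /meets !(eq_sym _ z) => /negbTE-> /negbTE->. Qed.

Lemma exists_notin (T : finType) (s : seq T) : size s < #|T| -> exists t, t \notin s.
Proof.
move=> s_lt; apply/existsP; rewrite -negb_forall; apply: contraL s_lt => /forallP s_all.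
rewrite -leqNgt; apply: leq_trans (card_size s); apply/subset_leq_card/subsetP => t _.
exact: s_all.
Qed.

Section Star.
Variables (T : finType) (G : rel T).
Hypotheses (G_sym : symmetric G) (G_total : forall v, exists u, G v u).
Hypothesis G_int : cross_intersecting G G.

Lemma exists_star (a : T) : exists c, forall v, v != c -> G c v.
Proof.
have [b Gab] := G_total a.
have [c /andP [ca nGac] | all_G] := pickP [pred c | (c != a) && ~~ G a c]; last first.
  by exists a => v va; move: (all_G v); rewrite /= va => /negbFE.
(* a is not a centre: then its non-neighbour c is adjacent to b, and b is one. *)
have Gcb : G c b.
  have [d Gcd] := G_total c.
  case/or4P: (G_int Gcd Gab) => /eqP e.
  - by rewrite e eqxx in ca.
  - by rewrite e Gab in nGac.
  - by rewrite e G_sym in Gcd; rewrite Gcd in nGac.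
  - by rewrite -e.
exists b => v vb; case: (eqVneq v a) => [-> | va]; first by rewrite G_sym.
have [u Gvu] := G_total v.
case/or4P: (G_int Gvu Gab) => /eqP e.
- by rewrite e eqxx in va.
- by rewrite e eqxx in vb.
- rewrite e in Gvu; case/or4P: (G_int Gvu Gcb) => /eqP e'.
  + by rewrite e' G_sym in Gvu; rewrite Gvu in nGac.
  + by rewrite e' eqxx in vb.
  + by rewrite e' eqxx in ca.
  + by rewrite -e' G_sym in Gcb; rewrite Gcb in nGac.
- by rewrite G_sym -e.
Qed.

End Star.

Lemma cross_intersecting_self (T : finType) (G H : rel T) :
  4 < #|T| -> (forall v, exists u, H v u) ->
  cross_intersecting G H -> cross_intersecting G G.
Proof.
move=> T_gt4 H_total GH p q r s Gpq Grs.
have [z] := exists_notin (s := [:: p; q; r; s]) T_gt4.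
rewrite !inE !negb_or => /and4P [zp zq zr zs].
have [y Hzy] := H_total z.
have /orP [/eqP py | /eqP qy] := meets_fresh zp zq (GH _ _ _ _ Gpq Hzy);
have /orP [/eqP ry | /eqP sy] := meets_fresh zr zs (GH _ _ _ _ Grs Hzy);
by rewrite /meets ?py ?qy ?ry ?sy eqxx ?orbT.
Qed.

Lemma exists_common_star (T : finType) (G H : rel T) :
  4 < #|T| -> symmetric G -> symmetric H ->
  (forall v, exists u, G v u) -> (forall v, exists u, H v u) ->
  cross_intersecting G H -> exists a, forall v, v != a -> G a v && H a v.
Proof.
move=> T_gt4 G_sym H_sym G_total H_total GH.
have /card_gt0P [t0 _] : 0 < #|T| by apply: leq_ltn_trans T_gt4.
have [a Ga] := exists_star G_sym G_total (cross_intersecting_self T_gt4 H_total GH) t0.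
have HG := cross_intersectingC GH.
have [b Hb] := exists_star H_sym H_total (cross_intersecting_self T_gt4 G_total HG) t0.
suff ab : a = b by exists a => v va; rewrite Ga // ab Hb // -ab.
apply/eqP; apply: contraT => ab.
have [z] : exists z, z \notin [:: a; b] by apply/exists_notin/(leq_ltn_trans _ T_gt4).
rewrite !inE negb_or => /andP [za zb].
have [w] : exists w, w \notin [:: a; b; z] by apply/exists_notin/(leq_ltn_trans _ T_gt4).
rewrite !inE !negb_or => /and3P [wa wb wz].
have := GH _ _ _ _ (Ga z za) (Hb w wb).
by rewrite /meets !(eq_sym _ w) (negbTE ab) (negbTE wa) (negbTE zb) (negbTE wz).
Qed.

Lemma canalyzing_restrict n (f : vec n.+1 -> bool) i b :
  canalyzing (restrict f i b) ->
  exists (j : 'I_n) (a c : bool), forall x : vec n.+1, x i = b -> x (lift i j) = a -> f x = c.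
Proof.
case=> j [a [c fc]]; exists j, a, c => x xi xj.
rewrite -(fc [ffun k => x (lift i k)]) ?ffunE //; congr f; apply/ffunP => k.
by rewrite ffunE; case: unliftP => [k' -> | ->]; rewrite ?ffunE.
Qed.

Section NonCanalyzing.
Variables (n : nat) (f : vec n.+1 -> bool).
Hypotheses (f_pos : positive f) (f_ncan : ~ canalyzing f).

Lemma false_of_card_le1 (x : vec n.+1) : #|supp x| <= 1 -> ~~ f x.
Proof.
case/(card_le1_subset1 ord0) => i sub_i; apply/negP => fx; apply: f_ncan.
exists i, true, true => y yi; apply: f_pos fx _; rewrite vle_supp.
by apply: subset_trans sub_i _; rewrite sub1set inE yi.
Qed.

Lemma true_of_card_ge (x : vec n.+1) : n <= #|supp x| -> f x.
Proof.
move=> n_le; have: #|~: supp x| <= 1.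
  by move: (cardsC (supp x)); rewrite card_ord; lia.
case/(card_le1_subset1 ord0) => i sub_i; case fx: (f x) => //; case: f_ncan.
exists i, false, false => y yi; apply/negbTE/negP => fy.
suff: f x by rewrite fx.
apply: f_pos fy _.
rewrite vle_supp -setCS; apply: subset_trans sub_i _.
by rewrite sub1set !inE yi.
Qed.

Lemma one_lt_n : 1 < n.
Proof.
rewrite ltnNge; apply/negP => n_le1.
have card1 : #|supp (chi [set ord0 : 'I_n.+1])| = 1 by rewrite supp_chi cards1.
by move: (false_of_card_le1 (eq_leq card1)); rewrite true_of_card_ge // card1.
Qed.

Lemma min_true_of_card (x : vec n.+1) : #|supp x| <= 2 -> f x -> min_true f x.
Proof.
move=> x_le2 fx; rewrite /min_true fx; apply/forallP => y; apply/implyP.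
case/andP => le_yx ne_yx; apply: false_of_card_le1.
by rewrite -ltnS; apply: leq_trans (card_supp_lt le_yx ne_yx) x_le2.
Qed.

Lemma max_false_of_card (x : vec n.+1) : n <= #|supp x|.+1 -> ~~ f x -> max_false f x.
Proof.
move=> x_ge nfx; rewrite /max_false nfx; apply/forallP => y; apply/implyP.
case/andP => le_xy ne_yx; apply: true_of_card_ge.
by apply: leq_trans x_ge (card_supp_lt le_xy _); rewrite eq_sym.
Qed.

Lemma mem_extremal_of_card (x : vec n.+1) :
  #|supp x| <= 2 -> n <= #|supp x|.+1 -> x \in extremal f.
Proof.
move=> x_le2 x_ge; rewrite inE; case fx: (f x).
  by rewrite min_true_of_card ?orbT.
by rewrite max_false_of_card ?fx.
Qed.

Lemma pair_meets_copair (p q r s : 'I_n.+1) :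
  f (chi [set p; q]) -> ~~ f (chi (~: [set r; s])) -> meets p q r s.
Proof.
move=> fpq; apply: contraR => no_meet; apply: f_pos fpq _.
rewrite vle_supp !supp_chi; apply/subsetP => k; rewrite !inE.
by case/orP => /eqP ->; move: no_meet; rewrite /meets; case: eqP; case: eqP.
Qed.

Lemma exists_true_pair i : canalyzing (restrict f i true) -> exists j, f (chi [set i; j]).
Proof.
case/canalyzing_restrict => j [[] [[] fc]]; set k := lift i j.
- by exists k; apply: fc; rewrite chiE !inE eqxx ?orbT.
- move: (fc (chi setT)); rewrite !chiE !inE true_of_card_ge ?supp_chi ?cardsT ?card_ord //.
  by move/(_ erefl erefl).
- move: (fc (chi [set i])); rewrite !chiE !inE eqxx eq_sym (negbTE (neq_lift i j)).
  rewrite (negbTE (false_of_card_le1 _)) ?supp_chi ?cards1 //.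
  by move/(_ erefl erefl).
- move: (fc (chi (~: [set k]))); rewrite !chiE !inE eqxx neq_lift.
  rewrite true_of_card_ge ?supp_chi ?cardsC1 ?card_ord //.
  by move/(_ erefl erefl).
Qed.

Lemma exists_false_copair i :
  canalyzing (restrict f i false) -> exists j, ~~ f (chi (~: [set i; j])).
Proof.
case/canalyzing_restrict => j [[] [[] fc]]; set k := lift i j.
- move: (fc (chi [set k])); rewrite !chiE !inE eqxx (negbTE (neq_lift i j)).
  rewrite (negbTE (false_of_card_le1 _)) ?supp_chi ?cards1 //.
  by move/(_ erefl erefl).
- move: (fc (chi (~: [set i]))); rewrite !chiE !inE eqxx eq_sym neq_lift.
  rewrite true_of_card_ge ?supp_chi ?cardsC1 ?card_ord //.
  by move/(_ erefl erefl).
- move: (fc (chi set0)); rewrite !chiE !inE.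
  rewrite (negbTE (false_of_card_le1 _)) ?supp_chi ?cards0 //.
  by move/(_ erefl erefl).
- by exists k; rewrite fc // chiE !inE eqxx ?orbT.
Qed.

Lemma card_extremal_of_star a :
  (forall v, v != a -> f (chi [set a; v]) && ~~ f (chi (~: [set a; v]))) ->
  n.*2 <= #|extremal f|.
Proof.
move=> star; have card_a : #|[set~ a]| = n by rewrite cardsC1 card_ord.
rewrite card_extremal -addnn; apply: leq_add.
  rewrite -{1}card_a -(@card_in_imset _ _ (fun v => chi [set a; v])).
    apply/subset_leq_card/subsetP => x /imsetP [v]; rewrite in_setC1 => va ->.
    have /andP [fav _] := star v va.
    by rewrite inE min_true_of_card // supp_chi cards2 eq_sym va.
  by move=> v w; rewrite !inE => va _ /chi_inj; apply: set2_inj.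
rewrite -{1}card_a -(@card_in_imset _ _ (fun v => chi (~: [set a; v]))).
  apply/subset_leq_card/subsetP => x /imsetP [v]; rewrite in_setC1 => va ->.
  have /andP [_ nfav] := star v va.
  rewrite inE max_false_of_card // supp_chi.
  by move: (cardsC [set a; v]); rewrite cards2 eq_sym va card_ord; lia.
by move=> v w; rewrite !inE => va _ /chi_inj/setC_inj; apply: set2_inj.
Qed.

Lemma card_extremal_n2 : n = 2 -> n.+3 <= #|extremal f|.
Proof.
move=> n2; rewrite card_extremal.
apply: (@leq_trans (#|layer n.+1 2| + #|layer n.+1 1|)); first by rewrite !card_layer n2.
apply: leq_add; apply/subset_leq_card/subsetP => x; rewrite !inE => /eqP x_card.
  by rewrite min_true_of_card ?x_card // true_of_card_ge ?x_card ?n2.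
by rewrite max_false_of_card ?x_card ?n2 // false_of_card_le1 ?x_card.
Qed.

Lemma card_extremal_n3 : n = 3 -> n.+3 <= #|extremal f|.
Proof.
move=> n3; apply: leq_trans (subset_leq_card (_ : layer n.+1 2 \subset _)).
  by rewrite card_layer n3.
apply/subsetP => x; rewrite inE => /eqP x_card.
by apply: mem_extremal_of_card; rewrite x_card ?n3.
Qed.

End NonCanalyzing.

Theorem mainTheorem8 (n : nat) (f : vec n.+1 -> bool) :
  positive f ->
  ~ canalyzing f ->
  (forall i : 'I_n.+1, canalyzing (restrict f i false) /\
                       canalyzing (restrict f i true)) ->
  n.+3 <= #|extremal f|.
Proof.
move=> f_pos f_ncan f_res; have n_gt1 := one_lt_n f_pos f_ncan.
have [n_gt3 | n_le3] := ltnP 3 n; last first.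
  have [n2 | n3] : n = 2 \/ n = 3 by lia.
  - exact: card_extremal_n2.
  - exact: card_extremal_n3.
have [a star] : exists a, forall v, v != a ->
    f (chi [set a; v]) && ~~ f (chi (~: [set a; v])).
  apply: exists_common_star.
  - by rewrite card_ord.
  - by move=> p q; rewrite setUC.
  - by move=> p q; rewrite setUC.
  - by move=> i; apply: exists_true_pair => //; case: (f_res i).
  - by move=> i; apply: exists_false_copair => //; case: (f_res i).
  - by move=> p q r s; apply: pair_meets_copair.
apply: leq_trans (card_extremal_of_star f_pos f_ncan star).
by rewrite -addnn; lia.
Qed.
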